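(* Let $\Sigma$ be a finite alphabet and let $L_1, L_2 \subseteq \Sigma^*$ be regular languages. Then $L_1 \leftarrow L_2$ is regular.
   Context: For strings $x, y \in \Sigma^*$, the outfix-guided insertion of $y$ into $x$ is $x \leftarrow y = \{ x_1 u z v x_2 \mid x = x_1 u v x_2,\ y = u z v,\ u \neq \varepsilon,\ v \neq \varepsilon \}$. For languages, $L_1 \leftarrow L_2 = \bigcup_{x \in L_1, y \in L_2} x \leftarrow y$. *)

From mathcomp Require Import all_boot.
Set Implicit Arguments. Unset Strict Implicit. Unset Printing Implicit Defensive.

Definition lang (Sigma : finType) := seq Sigma -> Prop.

Record dfa (Sigma : finType) := DFA {
  dfa_state : finType;
  dfa_start : dfa_state;
  dfa_final : {set dfa_state};
  dfa_trans : dfa_state -> Sigma -> dfa_state }.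

Definition dfa_accepts (Sigma : finType) (A : dfa Sigma) (w : seq Sigma) : bool :=
  foldl (@dfa_trans Sigma A) (@dfa_start Sigma A) w \in @dfa_final Sigma A.

Definition regular (Sigma : finType) (L : lang Sigma) : Prop :=
  exists A : dfa Sigma, forall w, L w <-> dfa_accepts A w.

Definition outfix_ins (Sigma : finType) (x y : seq Sigma) : lang Sigma :=
  fun w => exists x1 u z v x2 : seq Sigma,
    [/\ x = x1 ++ u ++ v ++ x2, y = u ++ z ++ v, u <> [::], v <> [::]
      & w = x1 ++ u ++ z ++ v ++ x2].

Definition outfix_ins_lang (Sigma : finType) (L1 L2 : lang Sigma) : lang Sigma :=
  fun w => exists x y, [/\ L1 x, L2 y & outfix_ins x y w].

(* A nondeterministic automaton guesses the five factors and simulates the DFA of L1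
   on x1 u v x2 (pausing while z is read) and the DFA of L2 on u z v, in parallel;
   the subset construction makes it deterministic. *)
From mathcomp Require Import all_boot.

Set Implicit Arguments. Unset Strict Implicit. Unset Printing Implicit Defensive.

Record nfa (Sigma : finType) := NFA {
  nfa_state : finType;
  nfa_start : nfa_state;
  nfa_final : pred nfa_state;
  nfa_step : nfa_state -> Sigma -> seq nfa_state }.
Arguments nfa_start {Sigma} n.
Arguments nfa_final {Sigma} n _.

Section SubsetConstruction.
Variables (Sigma : finType) (A : nfa Sigma).

Fixpoint nfa_accept (c : nfa_state A) (w : seq Sigma) : bool :=
  if w is a :: w' then has (nfa_accept^~ w') (nfa_step c a) else nfa_final A c.

Definition nfa_dfa : dfa Sigma :=
  @DFA Sigma {set nfa_state A} [set nfa_start A]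
    [set S : {set nfa_state A} | [exists c in S, nfa_final A c]]
    (fun S a => [set c' | [exists c in S, c' \in nfa_step c a]]).

Lemma nfa_dfa_run (S : {set nfa_state A}) w :
  (foldl (@dfa_trans _ nfa_dfa) S w \in @dfa_final _ nfa_dfa) =
  [exists c in S, nfa_accept c w].
Proof.
elim: w S => [|a w IH] S /=; first by rewrite inE.
rewrite IH; apply/existsP/existsP => [[c' /andP[]]|[c /andP[cS]]].
  rewrite inE => /existsP[c /andP[cS c'c]] acc.
  by exists c; rewrite cS /=; apply/hasP; exists c'.
case/hasP=> c' c'c acc; exists c'; rewrite acc andbT inE.
by apply/existsP; exists c; rewrite cS.
Qed.

Lemma nfa_regular (L : lang Sigma) :
  (forall w, L w <-> nfa_accept (nfa_start A) w) -> regular L.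
Proof.
move=> LA; exists nfa_dfa => w; rewrite /dfa_accepts nfa_dfa_run.
apply: iff_trans (LA w) _; split=> [acc|/existsP[c /andP[]]].
  by apply/existsP; exists (nfa_start A); rewrite inE eqxx.
by rewrite inE => /eqP ->.
Qed.

End SubsetConstruction.

Definition dfa_run (Sigma : finType) (A : dfa Sigma) := foldl (@dfa_trans _ A).
Arguments dfa_run {Sigma} A.

Section OutfixAutomaton.
Variables (Sigma : finType) (A1 A2 : dfa Sigma).

Local Notation Q1 := (dfa_state A1).
Local Notation Q2 := (dfa_state A2).
Local Notation t1 := (@dfa_trans _ A1).
Local Notation t2 := (@dfa_trans _ A2).

(* The five phases correspond to reading x1, u, z, v and x2. Entering [InU] and [InV]
   consumes a letter, which makes u and v nonempty. *)
Definition outfix_state : finType := ((((Q1 + Q1 * Q2) + Q1 * Q2) + Q1 * Q2) + Q1)%type.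
Definition Pre p : outfix_state := inl (inl (inl (inl p))).
Definition InU p q : outfix_state := inl (inl (inl (inr (p, q)))).
Definition InZ p q : outfix_state := inl (inl (inr (p, q))).
Definition InV p q : outfix_state := inl (inr (p, q)).
Definition Post p : outfix_state := inr p.

Definition outfix_step (c : outfix_state) (a : Sigma) : seq outfix_state :=
  match c with
  | inl (inl (inl (inl p))) => [:: Pre (t1 p a); InU (t1 p a) (t2 (dfa_start A2) a)]
  | inl (inl (inl (inr (p, q)))) =>
      [:: InU (t1 p a) (t2 q a); InZ p (t2 q a); InV (t1 p a) (t2 q a)]
  | inl (inl (inr (p, q))) => [:: InZ p (t2 q a); InV (t1 p a) (t2 q a)]
  | inl (inr (p, q)) =>
      InV (t1 p a) (t2 q a) :: (if q \in dfa_final A2 then [:: Post (t1 p a)] else [::])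
  | inr p => [:: Post (t1 p a)]
  end.

Definition outfix_final (c : outfix_state) : bool :=
  match c with
  | inl (inr (p, q)) => (p \in dfa_final A1) && (q \in dfa_final A2)
  | inr p => p \in dfa_final A1
  | _ => false
  end.

Definition outfix_nfa : nfa Sigma :=
  NFA (Pre (dfa_start A1)) outfix_final outfix_step.

Local Notation accept := (@nfa_accept _ outfix_nfa).

Lemma accept_Post p w : accept (Post p) w = (dfa_run A1 p w \in dfa_final A1).
Proof. by elim: w p => [|a w IH] p //=; rewrite orbF IH. Qed.

Lemma accept_InV p q w : accept (InV p q) w <->
  exists v x2, [/\ w = v ++ x2, dfa_run A2 q v \in dfa_final A2
    & dfa_run A1 p (v ++ x2) \in dfa_final A1].
Proof.
elim: w p q => [|a w IH] p q /=.
  split; first by case/andP=> F1 F2; exists [::], [::].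
  by case=> [[|? ?] [[|? ?] [] // _ F2 F1]]; rewrite F1 F2.
split.
  case/orP=> [/IH [v [x2 [-> F2 F1]]]|]; first by exists (a :: v), x2.
  by case: ifP => //= F2; rewrite orbF accept_Post => F1; exists [::], (a :: w).
case=> [[|b v] [x2 [Ew F2 F1]]].
  by move: Ew F1 => /= <- F1; rewrite F2 /= orbF accept_Post F1 orbT.
case: Ew => -> Ew; apply/orP; left; apply/IH; by exists v, x2.
Qed.

Lemma accept_InZ p q w : accept (InZ p q) w <->
  exists z v x2, [/\ w = z ++ v ++ x2, v <> [::],
    dfa_run A2 q (z ++ v) \in dfa_final A2
    & dfa_run A1 p (v ++ x2) \in dfa_final A1].
Proof.
elim: w p q => [|a w IH] p q /=.
  by split => //; case=> [[|? ?] [[|? ?] [[|? ?] [] //]]].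
rewrite orbF; split.
  case/orP=> [/IH [z [v [x2 [-> v0 F2 F1]]]]|/accept_InV [v [x2 [-> F2 F1]]]].
    by exists (a :: z), v, x2.
  by exists [::], (a :: v), x2.
case=> [[|b z] [[|c v] [x2 [//= Ew _ F2 F1]]]].
  case: Ew => -> Ew; apply/orP; right; apply/accept_InV; by exists v, x2.
case: Ew => -> Ew; apply/orP; left; apply/IH; by exists z, (c :: v), x2.
Qed.

Lemma accept_InU p q w : accept (InU p q) w <->
  exists u z v x2, [/\ w = u ++ z ++ v ++ x2, v <> [::],
    dfa_run A2 q (u ++ z ++ v) \in dfa_final A2
    & dfa_run A1 p (u ++ v ++ x2) \in dfa_final A1].
Proof.
elim: w p q => [|a w IH] p q /=.
  by split => //; case=> [[|? ?] [[|? ?] [[|? ?] [? [] //]]]].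
rewrite orbF; split.
  case/orP=> [/IH [u [z [v [x2 [-> v0 F2 F1]]]]]|/orP[]].
  - by exists (a :: u), z, v, x2.
  - case/accept_InZ=> z [v [x2 [-> v0 F2 F1]]]; by exists [::], (a :: z), v, x2.
  - case/accept_InV=> v [x2 [-> F2 F1]]; by exists [::], [::], (a :: v), x2.
case=> [[|b u] [z [v [x2 [Ew v0 F2 F1]]]]]; last first.
  case: Ew => -> Ew; apply/orP; left; apply/IH; by exists u, z, v, x2.
apply/orP; right; move: Ew F2 F1 v0; case: z => [|b z] /=.
  case: v => [|b v] //= [<- ->] F2 F1 _.
  by apply/orP; right; apply/accept_InV; exists v, x2.
case=> <- -> F2 F1 v0; apply/orP; left; apply/accept_InZ; by exists z, v, x2.
Qed.

Lemma accept_Pre p w : accept (Pre p) w <->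
  exists x1 u z v x2, [/\ w = x1 ++ u ++ z ++ v ++ x2, u <> [::], v <> [::],
    dfa_run A2 (dfa_start A2) (u ++ z ++ v) \in dfa_final A2
    & dfa_run A1 p (x1 ++ u ++ v ++ x2) \in dfa_final A1].
Proof.
elim: w p => [|a w IH] p /=.
  by split => //; case=> [[|? ?] [[|? ?] [? [? [? [] //]]]]].
rewrite orbF; split.
  case/orP=> [/IH [x1 [u [z [v [x2 [-> u0 v0 F2 F1]]]]]]|].
    by exists (a :: x1), u, z, v, x2.
  case/accept_InU=> u [z [v [x2 [-> v0 F2 F1]]]]; by exists [::], (a :: u), z, v, x2.
case=> [[|b x1] [u [z [v [x2 [Ew u0 v0 F2 F1]]]]]]; last first.
  case: Ew => -> Ew; apply/orP; left; apply/IH; by exists x1, u, z, v, x2.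
move: Ew F2 F1 u0; case: u => [|b u] //= [<- ->] F2 F1 _.
by apply/orP; right; apply/accept_InU; exists u, z, v, x2.
Qed.

End OutfixAutomaton.

Theorem lemma4p1 (Sigma : finType) (L1 L2 : lang Sigma) :
  regular L1 -> regular L2 -> regular (outfix_ins_lang L1 L2).
Proof.
move=> [A1 L1A1] [A2 L2A2]; apply: (nfa_regular (A := outfix_nfa A1 A2)) => w.
apply: iff_trans (iff_sym (accept_Pre _ _ _)); split.
  case=> x [y [/L1A1 Lx /L2A2 Ly [x1 [u [z [v [x2 [Ex Ey u0 v0 ->]]]]]]]].
  by exists x1, u, z, v, x2; rewrite -Ex -Ey.
case=> x1 [u [z [v [x2 [-> u0 v0 F2 F1]]]]].
exists (x1 ++ u ++ v ++ x2), (u ++ z ++ v).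
split; [exact/L1A1 | exact/L2A2 | by exists x1, u, z, v, x2].
Qed.
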